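(* Let $0<x_1<\cdots<x_m<1$, $k_0,k_1\in\mathbb{R}$, $\bar y_1,\dots,\bar y_m\in\mathbb{R}$, and for each $j$ let $\varphi_j:\mathbb{R}\to\mathbb{R}$ be a Gevrey function of order $\sigma$ with $1<\sigma<2$. Put $y_j(t)=\bar y_j\varphi_j(t)$. Then, for every $j$, every $x\in(0,1)$ and every $t$, each of the following series converges: for $x\in(0,x_j)$, $$\sum_{n=0}^\infty\sum_{k=0}^n\frac{x^{2k+1}(x_j-1)^{2(n-k)+1}}{(2k+1)!\,(2(n-k)+1)!}y_j^{(n)}(t),\quad \sum_{n=0}^\infty\sum_{k=0}^n\frac{x^{2k+1}(x_j-1)^{2(n-k)}}{(2k+1)!\,(2(n-k))!}y_j^{(n)}(t),$$ $$\sum_{n=0}^\infty\sum_{k=0}^n\frac{x^{2k}(x_j-1)^{2(n-k)+1}}{(2k)!\,(2(n-k)+1)!}y_j^{(n)}(t),\quad \sum_{n=0}^\infty\sum_{k=0}^n\frac{x^{2k}(x_j-1)^{2(n-k)}}{(2k)!\,(2(n-k))!}y_j^{(n)}(t),$$ the same four series with the roles of $x$ and $x_j$ interchanged (i.e. $x_j^{\cdot}(x-1)^{\cdot}$ in place of $x^{\cdot}(x_j-1)^{\cdot}$) for $x\in[x_j,1)$; and the series $$\sum_{n=0}^\infty\frac{y_j^{(n)}(t)}{(2n+1)!},\qquad \sum_{n=0}^\infty\frac{y_j^{(n)}(t)}{(2n)!},\qquad \sum_{n=0}^\infty\frac{y_j^{(n+1)}(t)}{(2n+1)!}.$$ Consequently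 the series $$\xi^j(x,t)=\sum_{n=0}^\infty\sum_{k=0}^n\Big[\tfrac{k_0k_1x^{2k+1}(x_j-1)^{2(n-k)+1}}{(2k+1)!(2(n-k)+1)!}-\tfrac{k_0x^{2k+1}(x_j-1)^{2(n-k)}}{(2k+1)!(2(n-k))!}+\tfrac{k_1x^{2k}(x_j-1)^{2(n-k)+1}}{(2k)!(2(n-k)+1)!}-\tfrac{x^{2k}(x_j-1)^{2(n-k)}}{(2k)!(2(n-k))!}\Big]y_j^{(n)}(t)$$ for $x\in(0,x_j)$ (and its analogue with $x,x_j$ interchanged for $x\in[x_j,1)$), and $$u_j(t)=k_0k_1\sum_{n=0}^\infty\frac{y_j^{(n)}(t)}{(2n+1)!}+(k_0+k_1)\sum_{n=0}^\infty\frac{y_j^{(n)}(t)}{(2n)!}+\sum_{n=0}^\infty\frac{y_j^{(n+1)}(t)}{(2n+1)!}$$ are convergent.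
   Context: A smooth function $\varphi$ is called a Gevrey function of order $\sigma>0$ if there exist constants $K,M>0$ such that $|\varphi^{(k+1)}(t)|\le M\,(k!)^\sigma/K^k$ for all integers $k\ge0$ and all $t$ (in the paper, $\varphi_j$ are smooth transition functions from 0 to 1, constant outside a bounded interval $[0,T]$, so the bound is required on that interval). *)

From Stdlib Require Import Reals.
From Coquelicot Require Import Coquelicot.
Open Scope R_scope.

Definition smooth (phi : R -> R) : Prop :=
  forall (n : nat) (t : R), ex_derive_n phi n t.

Definition gevrey (sigma : R) (phi : R -> R) : Prop :=
  smooth phi /\
  exists K M : R, 0 < K /\ 0 < M /\
    forall (k : nat) (t : R),
      Rabs (Derive_n phi (S k) t) <= M * Rpower (INR (Factorial.fact k)) sigma / K ^ k.

Definition coef (p q : nat) (a b : R) (n k : nat) : R :=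
  a ^ (2 * k + p) * b ^ (2 * (n - k) + q)
  / (INR (Factorial.fact (2 * k + p)) * INR (Factorial.fact (2 * (n - k) + q))).

Definition dterm (p q : nat) (a b : R) (y : R -> R) (t : R) (n : nat) : R :=
  sum_f_R0 (fun k => coef p q a b n k) n * Derive_n y n t.

(* n-th term of the series defining xi^j (with a = x, b = x_j - 1 on (0,x_j),
   and a = x_j, b = x - 1 on [x_j,1)). *)
Definition xiterm (k0 k1 a b : R) (y : R -> R) (t : R) (n : nat) : R :=
  sum_f_R0 (fun k =>
      k0 * k1 * coef 1 1 a b n k
    - k0 * coef 1 0 a b n k
    + k1 * coef 0 1 a b n k
    - coef 0 0 a b n k) n * Derive_n y n t.

From Stdlib Require Import Reals Factorial Lra Lia.
From Coquelicot Require Import Coquelicot.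
Open Scope R_scope.

(* The Gevrey bound gives |y^(n+1)(t)| <= C K^-n (n!)^sigma.  With |a|, |b| <= 1 the inner
   sums over k are at most 8^n / (2n)!, via C(2n, 2k) <= 4^n and n + 1 <= 2^n.  Since
   (n!)^2 <= (2n)!, every term is then O(c^n (n!)^(sigma - 2)), and for sigma < 2 the factor
   (n!)^(sigma - 2) beats any geometric growth, so the series are dominated by (1/2)^n. *)

Lemma INR_fact_pos n : 0 < INR (fact n).
Proof. apply lt_0_INR, lt_O_fact. Qed.

Lemma INR_fact_le m n : (m <= n)%nat -> INR (fact m) <= INR (fact n).
Proof. intros Hmn; apply le_INR, fact_le, Hmn. Qed.

Lemma sum_f_R0_ge_term (f : nat -> R) N i :
  (forall k, 0 <= f k) -> (i <= N)%nat -> f i <= sum_f_R0 f N.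
Proof.
  intros Hf; induction N as [|N IH]; intros Hi.
  - replace i with 0%nat by lia; simpl; lra.
  - simpl; destruct (Nat.eq_dec i (S N)) as [->|Hne].
    + assert (0 <= sum_f_R0 f N) by (apply cond_pos_sum; auto); lra.
    + assert (f i <= sum_f_R0 f N) by (apply IH; lia); specialize (Hf (S N)); lra.
Qed.

Lemma INR_succ_le_pow2 n : INR (S n) <= 2 ^ n.
Proof.
  induction n as [|n IH]; [simpl; lra|].
  rewrite S_INR; simpl pow.
  assert (1 <= 2 ^ n) by (apply pow_R1_Rle; lra); lra.
Qed.

Lemma INR_fact_sqr_le_fact_double k :
  INR (fact k) * INR (fact k) <= INR (fact (2 * k)).
Proof.
  pose proof (RfactN_fact2N_factk k 0 ltac:(lia)) as H.
  rewrite Nat.sub_0_r, Rmult_1_r in H; exact H.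
Qed.

Lemma pow_le_exp_mul_fact D k : 0 <= D -> D ^ k <= exp D * INR (fact k).
Proof.
  intros HD.
  assert (Hk : D ^ k / INR (fact k) <= exp D).
  { eapply Rle_trans; [|apply (exp_ge_taylor D k HD)].
    apply (sum_f_R0_ge_term (fun i => D ^ i / INR (fact i))); [|lia].
    intros i; apply Rdiv_le_0_compat; [apply pow_le, HD | apply INR_fact_pos]. }
  pose proof (INR_fact_pos k).
  apply Rmult_le_compat_r with (r := INR (fact k)) in Hk; [|lra].
  unfold Rdiv in Hk; rewrite Rmult_assoc, Rinv_l, Rmult_1_r in Hk; lra.
Qed.

(* Raise [D ^ k <= exp D * k!] to the power [e], with [D ^ e = c]. *)
Lemma pow_le_Rpower_fact c e : 0 < c -> 0 < e ->
  exists A, forall k, c ^ k <= A * Rpower (INR (fact k)) e.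
Proof.
  intros Hc He.
  set (D := exp (ln c / e)).
  assert (HD : 0 < D) by apply exp_pos.
  exists (Rpower (exp D) e); intros k.
  assert (Hck : Rpower (D ^ k) e = c ^ k).
  { rewrite <- (Rpower_pow k c Hc); unfold Rpower at 1 2.
    rewrite ln_pow by exact HD; unfold D; rewrite ln_exp; f_equal; field; lra. }
  rewrite <- Hck, Rpower_mult_distr by (apply exp_pos || apply INR_fact_pos).
  apply Rle_Rpower_l; [lra|].
  split; [apply pow_lt, HD | apply pow_le_exp_mul_fact; lra].
Qed.

Lemma Rpower_fact_div_fact_double_geom c sigma : 0 < c -> sigma < 2 ->
  exists A, forall k,
    c ^ k * Rpower (INR (fact k)) sigma / INR (fact (2 * k)) <= A * (/ 2) ^ k.
Proof.
  intros Hc Hs.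
  destruct (pow_le_Rpower_fact (2 * c) (2 - sigma)) as [A HA]; [lra | lra |].
  exists A; intros k.
  pose proof (INR_fact_pos k) as HF.
  set (F := INR (fact k)) in *.
  assert (HFF : Rpower F (2 - sigma) * Rpower F sigma = F * F).
  { rewrite <- Rpower_plus; replace (2 - sigma + sigma) with (INR 2) by (simpl; lra).
    rewrite Rpower_pow by exact HF; simpl; ring. }
  assert (HP : 0 < Rpower F sigma) by apply exp_pos.
  assert (H2k : c ^ k = (2 * c) ^ k * (/ 2) ^ k)
    by (rewrite <- Rpow_mult_distr; f_equal; field).
  apply Rle_trans with (c ^ k * Rpower F sigma / (F * F)).
  { unfold Rdiv; apply Rmult_le_compat_l.
    - apply Rmult_le_pos; [apply pow_le|]; lra.
    - apply Rinv_le_contravar; [nra | apply INR_fact_sqr_le_fact_double]. }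
  rewrite H2k, <- HFF.
  specialize (HA k); fold F in HA.
  assert (Hh : 0 < (/ 2) ^ k) by (apply pow_lt; lra).
  apply Rle_trans with (A * Rpower F (2 - sigma) * (/ 2) ^ k * Rpower F sigma
                        / (Rpower F (2 - sigma) * Rpower F sigma)).
  { unfold Rdiv; apply Rmult_le_compat_r.
    - left; apply Rinv_0_lt_compat, Rmult_lt_0_compat; [apply exp_pos | exact HP].
    - apply Rmult_le_compat_r; [lra|]; apply Rmult_le_compat_r; lra. }
  right; field; split; apply Rgt_not_eq, exp_pos.
Qed.

Lemma ex_series_le_Rpower_fact_div_fact_double (u : nat -> R) c sigma L :
  0 < c -> sigma < 2 -> 0 <= L ->
  (forall k, Rabs (u k) <= L * (c ^ k * Rpower (INR (fact k)) sigma / INR (fact (2 * k)))) ->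
  ex_series u.
Proof.
  intros Hc Hs HL Hu.
  destruct (Rpower_fact_div_fact_double_geom c sigma Hc Hs) as [A HA].
  apply (ex_series_le u (fun k => L * A * (/ 2) ^ k)).
  - intros k; change (norm (u k)) with (Rabs (u k)).
    eapply Rle_trans; [apply Hu|]; rewrite Rmult_assoc.
    apply Rmult_le_compat_l; [exact HL | apply HA].
  - apply (ex_series_scal (L * A) (fun k => (/ 2) ^ k)), ex_series_geom.
    rewrite Rabs_pos_eq; lra.
Qed.

Lemma binomial_le_pow2 n k : (k <= n)%nat -> Binomial.C n k <= 2 ^ n.
Proof.
  intros Hk.
  replace (2 ^ n) with ((1 + 1) ^ n) by (f_equal; lra).
  rewrite binomial.
  assert (Hterm : forall i, Binomial.C n i * 1 ^ i * 1 ^ (n - i) = Binomial.C n i)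
    by (intros i; rewrite !pow1; ring).
  rewrite <- Hterm.
  apply (sum_f_R0_ge_term (fun i => Binomial.C n i * 1 ^ i * 1 ^ (n - i))); [|exact Hk].
  intros i; rewrite Hterm; unfold Binomial.C.
  apply Rdiv_le_0_compat; [left; apply INR_fact_pos|].
  apply Rmult_lt_0_compat; apply INR_fact_pos.
Qed.

Lemma Rabs_sum_le_pow8_div_fact_double (g : nat -> R) n L : 0 <= L ->
  (forall k, (k <= n)%nat ->
     Rabs (g k) <= L / (INR (fact (2 * k)) * INR (fact (2 * (n - k))))) ->
  Rabs (sum_f_R0 g n) <= L * 8 ^ n / INR (fact (2 * n)).
Proof.
  intros HL Hg.
  pose proof (INR_fact_pos (2 * n)) as HF.
  eapply Rle_trans; [apply sum_f_R0_triangle|].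
  apply Rle_trans with (sum_f_R0 (fun _ => L * 4 ^ n / INR (fact (2 * n))) n).
  - apply sum_Rle; intros k Hk.
    eapply Rle_trans; [apply Hg, Hk|].
    assert (HC : L / (INR (fact (2 * k)) * INR (fact (2 * (n - k))))
                 = L * Binomial.C (2 * n) (2 * k) / INR (fact (2 * n))).
    { unfold Binomial.C; replace (2 * n - 2 * k)%nat with (2 * (n - k))%nat by lia.
      pose proof (INR_fact_pos (2 * k)); pose proof (INR_fact_pos (2 * (n - k))).
      field; lra. }
    rewrite HC; unfold Rdiv; apply Rmult_le_compat_r; [left; apply Rinv_0_lt_compat, HF|].
    apply Rmult_le_compat_l; [exact HL|].
    replace (4 ^ n) with (2 ^ (2 * n)) by (rewrite pow_mult; f_equal; lra).
    apply binomial_le_pow2; lia.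
  - rewrite sum_cte.
    pose proof (INR_succ_le_pow2 n).
    replace (8 ^ n) with (2 ^ n * 4 ^ n) by (rewrite <- Rpow_mult_distr; f_equal; lra).
    assert (0 <= L * 4 ^ n / INR (fact (2 * n))).
    { apply Rdiv_le_0_compat; [apply Rmult_le_pos; [exact HL | apply pow_le; lra] | exact HF]. }
    unfold Rdiv in *; nra.
Qed.

Lemma Rabs_coef_le p q a b n k : Rabs a <= 1 -> Rabs b <= 1 ->
  Rabs (coef p q a b n k) <= 1 / (INR (fact (2 * k)) * INR (fact (2 * (n - k)))).
Proof.
  intros Ha Hb; unfold coef.
  pose proof (INR_fact_pos (2 * k)); pose proof (INR_fact_pos (2 * (n - k))).
  pose proof (INR_fact_le (2 * k) (2 * k + p) ltac:(lia)).
  pose proof (INR_fact_le (2 * (n - k)) (2 * (n - k) + q) ltac:(lia)).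
  assert (Hpow : forall c e, Rabs c <= 1 -> 0 <= Rabs (c ^ e) <= 1).
  { intros c e Hc; rewrite <- RPow_abs; split; [apply pow_le, Rabs_pos|].
    rewrite <- (pow1 e); apply pow_incr; split; [apply Rabs_pos | exact Hc]. }
  destruct (Hpow a (2 * k + p)%nat Ha), (Hpow b (2 * (n - k) + q)%nat Hb).
  unfold Rdiv; rewrite Rabs_mult, Rabs_mult, Rabs_inv.
  rewrite (Rabs_pos_eq (INR (fact (2 * k + p)) * _)) by nra.
  apply Rmult_le_compat; try nra.
  - left; apply Rinv_0_lt_compat; nra.
  - apply Rinv_le_contravar; [nra | apply Rmult_le_compat; lra].
Qed.

Lemma xiterm_eq k0 k1 a b y t n :
  xiterm k0 k1 a b y t n =
    k0 * k1 * dterm 1 1 a b y t n - k0 * dterm 1 0 a b y t n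
  + k1 * dterm 0 1 a b y t n - dterm 0 0 a b y t n.
Proof.
  assert (Hlin : forall (f1 f2 f3 f4 : nat -> R) N,
    sum_f_R0 (fun k => k0 * k1 * f1 k - k0 * f2 k + k1 * f3 k - f4 k) N =
    k0 * k1 * sum_f_R0 (fun k => f1 k) N - k0 * sum_f_R0 (fun k => f2 k) N
    + k1 * sum_f_R0 (fun k => f3 k) N - sum_f_R0 (fun k => f4 k) N).
  { intros f1 f2 f3 f4 N; induction N as [|N IH]; simpl; [|rewrite IH]; ring. }
  unfold xiterm, dterm; rewrite Hlin; ring.
Qed.

Section GevreyDerivativeSeries.

Variables (y : R -> R) (t sigma K C : R).
Hypotheses (Hsigma : sigma < 2) (HK : 0 < K) (HC : 0 <= C).
Hypothesis Hy : forall k,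
  Rabs (Derive_n y (S k) t) <= C * (/ K) ^ k * Rpower (INR (fact k)) sigma.

Lemma ex_series_mul_Derive_n (I : nat -> R) L : 0 <= L ->
  (forall n, Rabs (I n) <= L * 8 ^ n / INR (fact (2 * n))) ->
  ex_series (fun n => I n * Derive_n y n t).
Proof.
  intros HL HI.
  apply ex_series_incr_1.
  apply (ex_series_le_Rpower_fact_div_fact_double _ (8 / K) sigma (8 * L * C));
    [apply Rdiv_lt_0_compat; lra | exact Hsigma | apply Rmult_le_pos; lra |].
  intros k; rewrite Rabs_mult.
  pose proof (INR_fact_pos (2 * k)); pose proof (INR_fact_le (2 * k) (2 * S k) ltac:(lia)).
  assert (HP : 0 < Rpower (INR (fact k)) sigma) by apply exp_pos.
  assert (HKk : 0 < (/ K) ^ k) by (apply pow_lt, Rinv_0_lt_compat, HK).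
  assert (H8k : 0 < 8 ^ k) by (apply pow_lt; lra).
  apply Rle_trans with
    (L * 8 ^ S k / INR (fact (2 * S k)) * (C * (/ K) ^ k * Rpower (INR (fact k)) sigma)).
  { apply Rmult_le_compat; [apply Rabs_pos | apply Rabs_pos | apply HI | apply Hy]. }
  set (X := 8 * L * C * 8 ^ k * (/ K) ^ k * Rpower (INR (fact k)) sigma).
  assert (HX : 0 <= X) by (unfold X; repeat apply Rmult_le_pos; lra).
  replace (L * 8 ^ S k / INR (fact (2 * S k)) * (C * (/ K) ^ k * Rpower (INR (fact k)) sigma))
    with (X * / INR (fact (2 * S k))) by (unfold X, Rdiv; simpl pow; ring).
  replace (8 * L * C * ((8 / K) ^ k * Rpower (INR (fact k)) sigma / INR (fact (2 * k))))
    with (X * / INR (fact (2 * k))) by (unfold X, Rdiv; rewrite Rpow_mult_distr; ring).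
  apply Rmult_le_compat_l; [exact HX | apply Rinv_le_contravar; lra].
Qed.

Lemma ex_series_dterm p q a b : Rabs a <= 1 -> Rabs b <= 1 ->
  ex_series (dterm p q a b y t).
Proof.
  intros Ha Hb; apply (ex_series_mul_Derive_n _ 1); [lra|].
  intros n; apply Rabs_sum_le_pow8_div_fact_double; [lra|].
  intros k _; apply Rabs_coef_le; assumption.
Qed.

Lemma ex_series_xiterm k0 k1 a b : Rabs a <= 1 -> Rabs b <= 1 ->
  ex_series (xiterm k0 k1 a b y t).
Proof.
  intros Ha Hb.
  apply (ex_series_ext (fun n =>
      k0 * k1 * dterm 1 1 a b y t n - k0 * dterm 1 0 a b y t n
    + k1 * dterm 0 1 a b y t n - dterm 0 0 a b y t n));
    [intros n; symmetry; apply xiterm_eq|].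
  pose proof (ex_series_dterm 1 1 a b Ha Hb) as H11.
  pose proof (ex_series_dterm 1 0 a b Ha Hb) as H10.
  pose proof (ex_series_dterm 0 1 a b Ha Hb) as H01.
  pose proof (ex_series_dterm 0 0 a b Ha Hb) as H00.
  exact (ex_series_minus _ _ (ex_series_plus _ _
           (ex_series_minus _ _ (ex_series_scal (k0 * k1) _ H11) (ex_series_scal k0 _ H10))
           (ex_series_scal k1 _ H01)) H00).
Qed.

Lemma ex_series_Derive_n_div_fact (N : nat -> nat) :
  (forall n, (2 * n <= N n)%nat) ->
  ex_series (fun n => Derive_n y n t / INR (fact (N n))).
Proof.
  intros HN.
  apply (ex_series_ext (fun n => / INR (fact (N n)) * Derive_n y n t));
    [intros n; apply Rmult_comm|].
  apply (ex_series_mul_Derive_n _ 1); [lra|]; intros n.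
  pose proof (INR_fact_pos (2 * n)); pose proof (INR_fact_le _ _ (HN n)).
  assert (1 <= 8 ^ n) by (apply pow_R1_Rle; lra).
  rewrite Rabs_pos_eq by (left; apply Rinv_0_lt_compat; lra).
  unfold Rdiv; rewrite Rmult_1_l.
  apply Rle_trans with (/ INR (fact (2 * n))); [apply Rinv_le_contravar; lra|].
  rewrite <- (Rmult_1_l (/ INR (fact (2 * n)))) at 1.
  apply Rmult_le_compat_r; [left; apply Rinv_0_lt_compat|]; lra.
Qed.

Lemma ex_series_Derive_n_succ_div_fact (N : nat -> nat) :
  (forall n, (2 * n <= N n)%nat) ->
  ex_series (fun n => Derive_n y (S n) t / INR (fact (N n))).
Proof.
  intros HN.
  apply (ex_series_le_Rpower_fact_div_fact_double _ (/ K) sigma C);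
    [apply Rinv_0_lt_compat, HK | exact Hsigma | exact HC |].
  intros k.
  pose proof (INR_fact_pos (2 * k)); pose proof (INR_fact_le _ _ (HN k)).
  unfold Rdiv; rewrite Rabs_mult, (Rabs_pos_eq (/ _)) by (left; apply Rinv_0_lt_compat; lra).
  rewrite <- !Rmult_assoc.
  apply Rmult_le_compat; [apply Rabs_pos | left; apply Rinv_0_lt_compat; lra | apply Hy |].
  apply Rinv_le_contravar; lra.
Qed.

End GevreyDerivativeSeries.

Lemma gevrey_scal_Derive_n_bound sigma c phi : gevrey sigma phi ->
  exists K C, 0 < K /\ 0 <= C /\ forall k t,
    Rabs (Derive_n (fun t => c * phi t) (S k) t) <= C * (/ K) ^ k * Rpower (INR (fact k)) sigma.
Proof.
  intros [_ [K [M [HK [HM HB]]]]].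
  exists K, (Rabs c * M); repeat split; [exact HK | apply Rmult_le_pos; [apply Rabs_pos | lra] |].
  intros k t; rewrite Derive_n_scal_l, Rabs_mult.
  replace (Rabs c * M * (/ K) ^ k * Rpower (INR (fact k)) sigma)
    with (Rabs c * (M * Rpower (INR (fact k)) sigma / K ^ k))
    by (rewrite pow_inv; unfold Rdiv; ring).
  apply Rmult_le_compat_l; [apply Rabs_pos | apply HB].
Qed.

Theorem proposition3
  (m : nat) (xs : nat -> R) (k0 k1 sigma : R)
  (ybar : nat -> R) (phi : nat -> R -> R)
  (Hpos : forall i, (i < m)%nat -> 0 < xs i)
  (Hinc : forall i, (S i < m)%nat -> xs i < xs (S i))
  (Hlt1 : forall i, (i < m)%nat -> xs i < 1)
  (Hsig : 1 < sigma < 2)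
  (Hgev : forall j, (j < m)%nat -> gevrey sigma (phi j)) :
  forall (j : nat), (j < m)%nat ->
  let y := fun t => ybar j * phi j t in
  forall (x t : R), 0 < x < 1 ->
    ((x < xs j) ->
       ex_series (dterm 1 1 x (xs j - 1) y t) /\
       ex_series (dterm 1 0 x (xs j - 1) y t) /\
       ex_series (dterm 0 1 x (xs j - 1) y t) /\
       ex_series (dterm 0 0 x (xs j - 1) y t) /\
       ex_series (xiterm k0 k1 x (xs j - 1) y t)) /\
    ((xs j <= x) ->
       ex_series (dterm 1 1 (xs j) (x - 1) y t) /\
       ex_series (dterm 1 0 (xs j) (x - 1) y t) /\
       ex_series (dterm 0 1 (xs j) (x - 1) y t) /\
       ex_series (dterm 0 0 (xs j) (x - 1) y t) /\
       ex_series (xiterm k0 k1 (xs j) (x - 1) y t)) /\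
    ex_series (fun n => Derive_n y n t / INR (Factorial.fact (2 * n + 1))) /\
    ex_series (fun n => Derive_n y n t / INR (Factorial.fact (2 * n))) /\
    ex_series (fun n => Derive_n y (S n) t / INR (Factorial.fact (2 * n + 1))) /\
    ex_series (fun n =>
        k0 * k1 * (Derive_n y n t / INR (Factorial.fact (2 * n + 1)))
      + (k0 + k1) * (Derive_n y n t / INR (Factorial.fact (2 * n)))
      + Derive_n y (S n) t / INR (Factorial.fact (2 * n + 1))).
Proof.
  intros j Hj y x t Hx.
  destruct (gevrey_scal_Derive_n_bound sigma (ybar j) (phi j) (Hgev j Hj))
    as [K [C [HK [HC Hy]]]].
  pose proof (fun k => Hy k t) as Hyt.
  assert (Hs : sigma < 2) by lra.
  pose proof (ex_series_dterm y t sigma K C Hs HK HC Hyt) as Hdt.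
  pose proof (ex_series_xiterm y t sigma K C Hs HK HC Hyt k0 k1) as Hxi.
  pose proof (ex_series_Derive_n_div_fact y t sigma K C Hs HK HC Hyt
                (fun n => 2 * n + 1)%nat (fun n => Nat.le_add_r _ _)) as S1.
  pose proof (ex_series_Derive_n_div_fact y t sigma K C Hs HK HC Hyt
                (fun n => 2 * n)%nat (fun n => le_n _)) as S2.
  pose proof (ex_series_Derive_n_succ_div_fact y t sigma K C Hs HK HC Hyt
                (fun n => 2 * n + 1)%nat (fun n => Nat.le_add_r _ _)) as S3.
  pose proof (Hpos j Hj); pose proof (Hlt1 j Hj).
  assert (Hx1 : Rabs x <= 1) by (apply Rabs_le; lra).
  assert (Hxj : Rabs (xs j) <= 1) by (apply Rabs_le; lra).
  assert (Hxm1 : Rabs (x - 1) <= 1) by (apply Rabs_le; lra).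
  assert (Hxjm1 : Rabs (xs j - 1) <= 1) by (apply Rabs_le; lra).
  repeat split; auto.
  exact (ex_series_plus _ _ (ex_series_plus _ _ (ex_series_scal (k0 * k1) _ S1)
           (ex_series_scal (k0 + k1) _ S2)) S3).
Qed.
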